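(* Let $X_t$ be the random walk on a finite T-graph all of whose segments have length at most $L$. For $r\ge L$ and $X_0\in B(0,r)$, let $\tau_r$ be the first time $X_t$ exits $B(0,r)$ or reaches a boundary vertex. Then for all integers $n\ge1$, $\mathbb P(\tau_r\ge 18nr^2)\le 2^{-n}$.
   Context: A finite T-graph is a finite collection of pairwise disjoint open segments $S_i$ and points $x_j$ in $\mathbb C$ such that $(\cup S_i)\cup(\cup x_j)$ is closed and connected and every $x_j$ lies on the boundary of the unbounded component of its complement; the $x_j$ are boundary vertices. Vertices are all endpoints of segments; every non-boundary (interior) vertex $x$ lies in exactly one open segment $S$. The random walk on the T-graph is the continuous-time pure jump Markov process in which boundary vertices are absorbing and from an interior vertex $x\in S$, with $x^+,x^-$ the neighbouring vertices of $x$ on $\overline S$ on either side, it jumps to $x^\pm$ at rate $\frac{1}{|x^\pm-x|\,|x^+-x^-|}$. (This walk is a martingale and $\frac{d}{dt}\mathrm{Tr}\,\mathrm{Var}(X_t)=1$ before absorption.) *)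

From HB Require Import structures.
From mathcomp Require Import all_boot all_order all_algebra.
From mathcomp Require Import all_classical all_reals all_analysis.
Import numFieldNormedType.Exports.
Set Implicit Arguments. Unset Strict Implicit. Unset Printing Implicit Defensive.
Import Order.TTheory GRing.Theory Num.Theory.
Local Open Scope classical_set_scope.
Local Open Scope ring_scope.

(* The plane C is modelled as R * R (product topology = Euclidean topology). *)
Section TGraph.
Variable R : realType.

Local Notation pt := (R * R)%type.

Definition pnorm (p : pt) : R := Num.sqrt (p.1 ^+ 2 + p.2 ^+ 2).
Definition pdist (p q : pt) : R := pnorm (p.1 - q.1, p.2 - q.2).

Definition lerp (a b : pt) (t : R) : pt :=
  (a.1 + t * (b.1 - a.1), a.2 + t * (b.2 - a.2)).

Definition oseg (a b : pt) : set pt :=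
  [set x | exists t : R, [/\ 0 < t, t < 1 & x = lerp a b t]].
Definition cseg (a b : pt) : set pt :=
  [set x | exists t : R, [/\ 0 <= t, t <= 1 & x = lerp a b t]].

Definition bounded_set (S : set pt) : Prop :=
  exists M : R, forall x, S x -> pnorm x <= M.

Definition topo_boundary (S : set pt) : set pt := closure S `\` interior S.

Definition seg0 : pt * pt := ((0, 0), (0, 0)).

Definition tg_union (segs : seq (pt * pt)) (bpts : seq pt) : set pt :=
  [set x | (exists2 s, s \in segs & oseg s.1 s.2 x) \/ x \in bpts].

Definition verts (segs : seq (pt * pt)) (bpts : seq pt) : seq pt :=
  undup (flatten [seq [:: s.1; s.2] | s <- segs] ++ bpts).

Definition is_Tgraph (segs : seq (pt * pt)) (bpts : seq pt) : Prop :=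
  (forall s, s \in segs -> s.1 != s.2) /\
      (forall i j, (i < size segs)%N -> (j < size segs)%N -> i != j ->
         forall x, oseg (nth seg0 segs i).1 (nth seg0 segs i).2 x ->
                   ~ oseg (nth seg0 segs j).1 (nth seg0 segs j).2 x) /\
      closed (tg_union segs bpts) /\
      connected (tg_union segs bpts) /\
      (forall x, x \in bpts ->
         exists y, [/\ (~` tg_union segs bpts) y,
           ~ bounded_set (connected_component (~` tg_union segs bpts) y) &
           topo_boundary (connected_component (~` tg_union segs bpts) y) x]) /\
      (forall x, x \in verts segs bpts -> x \notin bpts ->
         exists i, [/\ (i < size segs)%N,
           oseg (nth seg0 segs i).1 (nth seg0 segs i).2 x &
           forall j, (j < size segs)%N ->
             oseg (nth seg0 segs j).1 (nth seg0 segs j).2 x -> j = i]).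

Definition nverts segs bpts := size (verts segs bpts).

Definition vtx segs bpts (i : 'I_(nverts segs bpts)) : pt :=
  nth (0, 0) (verts segs bpts) i.

Section Walk.
Variables (segs : seq (pt * pt)) (bpts : seq pt).
Local Notation n := (nverts segs bpts).
Local Notation v := (@vtx segs bpts).

(* j is one of the two neighbours x^+, x^- of the interior vertex x = v i on
   the closure of the open segment S containing x: a vertex of the closed
   segment, different from x, with no vertex strictly between x and it. *)
Definition nbr (i j : 'I_n) : bool :=
  `[< [/\ v i \notin bpts, j != i &
        exists2 s, s \in segs &
          [/\ oseg s.1 s.2 (v i), cseg s.1 s.2 (v j) &
              forall k : 'I_n, ~ oseg (v i) (v j) (v k)]] >].

(* |x^+ - x^-| : the distance between the two neighbours *)
Definition nbr_span (i : 'I_n) : R :=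
  \big[Num.max/0]_(j | nbr i j) \big[Num.max/0]_(k | nbr i k) pdist (v j) (v k).

Definition rate (i j : 'I_n) : R :=
  if nbr i j then (pdist (v j) (v i) * nbr_span i)^-1 else 0.

(* generator of the walk (boundary vertices absorbing: zero rows) *)
Definition generator : 'M[R]_n :=
  \matrix_(i, j) if i == j then - \sum_(k | k != i) rate i k else rate i j.

Definition alive (r : R) (i : 'I_n) : bool := (v i \notin bpts) && (pnorm (v i) < r).

Definition killed_gen (r : R) : 'M[R]_n :=
  \matrix_(i, j) if alive r i && alive r j then generator i j else 0.

Definition mpow (M : 'M[R]_n) (k : nat) : 'M[R]_n := iter k (mulmx M) 1%:M.

Definition alive_ind (r : R) : 'cV[R]_n := \col_i (alive r i)%:R.

(* P_{X_0 = v i}(tau_r > t) = (exp (t K_r) 1_{alive})_i, with the matrix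
   exponential given by its power series. *)
Definition survival (r t : R) (i : 'I_n) : R :=
  limn (fun N => \sum_(k < N) (t ^+ k / (k`!)%:R) *
                   (mpow (killed_gen r) k *m alive_ind r) i 0).

End Walk.
End TGraph.

From HB Require Import structures.
From mathcomp Require Import all_boot all_order all_algebra.
From mathcomp Require Import all_classical all_reals all_analysis.
From mathcomp Require Import ring lra.
Import numFieldNormedType.Exports.
Import Order.TTheory GRing.Theory Num.Theory.
Set Implicit Arguments. Unset Strict Implicit. Unset Printing Implicit Defensive.
Local Open Scope ring_scope.

(* Survival of the walk killed on leaving the interior vertices of B(0,r) is
   [exp (t K) 1], with [K] the killed generator, an essentially nonnegative
   (Metzler) matrix.  As [|X|^2 - t] is a martingale and one jump from inside
   B(0,r) along a segment of length at most [L <= r] stays in B(0,2r), the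
   function [g = 1_alive (4 r^2 - |x|^2)] satisfies [0 <= g <= 4 r^2] and
   [K g <= -1] on alive states.  Positivity of [exp (t K)] turns this into
   [t P(tau > t) <= 4 r^2], hence [P(tau > T) <= 1/2] from every start when
   [T >= 8 r^2], and the semigroup property iterates this to
   [P(tau > n T) <= 2^-n]. *)

Section MatrixExponential.
Variables (R : realType) (N : nat).
Implicit Types (M A : 'M[R]_N) (v w : 'cV[R]_N) (s t : R).

Definition vnorm1 v : R := \sum_j `|v j 0|.
Definition mxnorm1 M : R := \sum_i \sum_j `|M i j|.

Lemma vnorm1_ge0 v : 0 <= vnorm1 v.
Proof. exact: sumr_ge0. Qed.

Lemma mxnorm1_ge0 M : 0 <= mxnorm1 M.
Proof. by apply: sumr_ge0 => i _; apply: sumr_ge0. Qed.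

Lemma normr_le_vnorm1 v i : `|v i 0| <= vnorm1 v.
Proof. by rewrite /vnorm1 (bigD1 i) //= lerDl sumr_ge0. Qed.

Lemma normr_le_mxnorm1 M i j : `|M i j| <= mxnorm1 M.
Proof.
rewrite /mxnorm1 (bigD1 i) //= (bigD1 j) //= -addrA lerDl.
by rewrite addr_ge0 ?sumr_ge0 // => k _; apply: sumr_ge0.
Qed.

Lemma vnorm1_mul M v : vnorm1 (M *m v) <= mxnorm1 M * vnorm1 v.
Proof.
rewrite /vnorm1 /mxnorm1 mulr_suml; apply: ler_sum => i _.
rewrite mxE (le_trans (ler_norm_sum _ _ _)) // mulr_suml; apply: ler_sum => j _.
by rewrite normrM ler_wpM2l // normr_le_vnorm1.
Qed.

Lemma vnorm1_mulX M v k : vnorm1 (M ^+ k *m v) <= mxnorm1 M ^+ k * vnorm1 v.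
Proof.
elim: k => [|k IHk]; first by rewrite expr0 -idmxE mul1mx mul1r.
rewrite exprS -mulmxE -mulmxA exprS -mulrA (le_trans (vnorm1_mul _ _)) //.
by rewrite ler_wpM2l // mxnorm1_ge0.
Qed.

Definition expmx_coef M v i k : R := (M ^+ k *m v) i 0 / k`!%:R.

Definition expmxv M t v : 'cV[R]_N := \col_i limn (pseries (expmx_coef M v i) t).

Lemma cvg_pseries_expmx_coef M v i t : cvgn (pseries (expmx_coef M v i) t).
Proof.
apply: normed_cvg.
pose e := exp_coeff (mxnorm1 M * `|t|).
apply: (@series_le_cvg _ _ (fun k => vnorm1 v * e k)) => [k|k|k|] /=.
- exact: normr_ge0.
- by rewrite mulr_ge0 ?vnorm1_ge0 ?exp_coeff_ge0 ?mulr_ge0 ?mxnorm1_ge0.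
- rewrite /expmx_coef /e /exp_coeff /= !normrM normfV normr_nat normrX exprMn.
  have hk : 0 <= `|t| ^+ k / k`!%:R by rewrite divr_ge0 ?exprn_ge0.
  have := ler_wpM2r hk (le_trans (normr_le_vnorm1 _ i) (vnorm1_mulX M v k)).
  by congr (_ <= _); ring.
- rewrite (_ : series _ = vnorm1 v *: series e); last first.
    by apply/funext => m; rewrite /series /= -mulr_sumr.
  by apply: is_cvgZl_tmp; exact: is_cvg_series_exp_coeff.
Qed.

Lemma pseries_diffs_expmx_coef M v i :
  pseries_diffs (expmx_coef M v i) = expmx_coef M (M *m v) i.
Proof.
apply/funext => k; rewrite /pseries_diffs /expmx_coef exprSr -mulmxE -mulmxA.
rewrite factS natrM.
have k1_neq0 : 1 + k%:R != 0 :> R by rewrite addrC natr1 pnatr_eq0.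
have kf_neq0 : k`!%:R != 0 :> R by rewrite pnatr_eq0 -lt0n fact_gt0.
by field; rewrite kf_neq0 k1_neq0.
Qed.

Lemma is_derive_expmxv M v i t :
  is_derive t 1 (fun s => expmxv M s v i 0) (expmxv M t (M *m v) i 0).
Proof.
rewrite mxE (_ : (fun s => _) = fun s => limn (pseries (expmx_coef M v i) s)).
  rewrite -pseries_diffs_expmx_coef.
  apply: (@pseries_snd_diffs _ _ (`|t| + 1));
    rewrite ?pseries_diffs_expmx_coef; try exact: cvg_pseries_expmx_coef.
  by rewrite [ltRHS]ger0_norm ?ltrDl // addr_ge0.
by apply/funext => s; rewrite mxE.
Qed.

Lemma limn_pseries_cst (c : R^nat) t :
  (forall k, (0 < k)%N -> c k * t ^+ k = 0) -> limn (pseries c t) = c 0%N.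
Proof.
move=> c0; apply: (@lim_near_cst R) => //.
near=> m; rewrite -[m]prednK; last by near: m.
rewrite /pseries /series /= big_nat_recl // big1 ?addr0 ?expr0 ?mulr1 //.
by move=> k _; apply: c0.
Unshelve. all: by end_near. Qed.

Lemma expmxv0 M v : expmxv M 0 v = v.
Proof.
apply/matrixP => i j; rewrite ord1 mxE limn_pseries_cst.
  by rewrite /expmx_coef expr0 -idmxE mul1mx divr1.
by move=> k k_gt0; rewrite expr0n gtn_eqF // mulr0.
Qed.

Lemma expmxv_row0 M t v l : (forall j, M l j = 0) -> expmxv M t v l 0 = v l 0.
Proof.
move=> Ml0; rewrite mxE limn_pseries_cst.
  by rewrite /expmx_coef expr0 -idmxE mul1mx divr1.
case=> // k _; rewrite /expmx_coef exprS -mulmxE -mulmxA mxE big1 ?mul0r //.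
by move=> j _; rewrite Ml0 mul0r.
Qed.

Lemma expmxvD M t v w : expmxv M t (v + w) = expmxv M t v + expmxv M t w.
Proof.
apply/matrixP => i j; rewrite ord1 !mxE -limD; try exact: cvg_pseries_expmx_coef.
rewrite /pseries -seriesD; apply: (congr1 (fun u => limn (series u))).
by apply/funext => k /=; rewrite /expmx_coef mulmxDr mxE fctE; ring.
Qed.

Lemma expmxvZ M t c v : expmxv M t (c *: v) = c *: expmxv M t v.
Proof.
apply/matrixP => i j; rewrite ord1 !mxE.
transitivity (limn (c *: pseries (expmx_coef M v i) t)).
  rewrite /pseries -seriesZ; apply: (congr1 (fun u => limn (series u))).
  by apply/funext => k /=; rewrite /expmx_coef -scalemxAr mxE fctE /GRing.scale /=; ring.
by rewrite limZl_tmp //; exact: cvg_pseries_expmx_coef.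
Qed.

Lemma limn_sum (I : finType) (u : I -> R^nat) :
  (forall j, cvgn (u j)) -> limn (fun n => \sum_j u j n) = \sum_j limn (u j).
Proof.
by move=> u_cvg; apply: cvg_lim => //; apply: cvg_big => //; exact: add_continuous.
Qed.

Lemma expmxv_mulmx M t v : expmxv M t (M *m v) = M *m expmxv M t v.
Proof.
apply/matrixP => i o; rewrite ord1 !mxE.
have u_cvg j : cvgn (M i j *: pseries (expmx_coef M v j) t).
  by apply: is_cvgZl_tmp; exact: cvg_pseries_expmx_coef.
transitivity (limn (fun n => \sum_j (M i j *: pseries (expmx_coef M v j) t) n)).
  apply: (congr1 (fun u => limn u)); apply/funext => n.
  rewrite /pseries /series /=.
  under [RHS]eq_bigr do rewrite fctE /= scaler_sumr.
  rewrite [RHS]exchange_big /=; apply: eq_bigr => k _.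
  rewrite /expmx_coef mulmxA mulmxE -exprSr exprS -mulmxE -mulmxA mxE !mulr_suml.
  by apply: eq_bigr => l _; rewrite /GRing.scale /=; ring.
rewrite (limn_sum u_cvg); apply: eq_bigr => l _; rewrite limZl_tmp ?mxE //.
exact: cvg_pseries_expmx_coef.
Qed.

Lemma expmxv_ge0_nonneg M t v :
  (forall i j, 0 <= M i j) -> (forall j, 0 <= v j 0) -> 0 <= t ->
  forall i, 0 <= expmxv M t v i 0.
Proof.
move=> M_ge0 v_ge0 t_ge0 i.
have MX_ge0 k i' j : 0 <= (M ^+ k) i' j.
  elim: k i' j => [|k IHk] i' j; first by rewrite expr0 mxE ler0n.
  by rewrite exprS -mulmxE mxE sumr_ge0 // => l _; rewrite mulr_ge0.
rewrite mxE; apply: limr_ge; first exact: cvg_pseries_expmx_coef.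
apply: nearW => m; apply: sumr_ge0 => k _.
rewrite mulr_ge0 ?exprn_ge0 ?divr_ge0 // mxE.
by apply: sumr_ge0 => l _; rewrite mulr_ge0.
Qed.

Definition solves_linear_ode A (z : R -> 'cV[R]_N) :=
  forall s i, is_derive s 1 (fun s => z s i 0) ((A *m z s) i 0).

Lemma expmxv_solves M v : solves_linear_ode M (fun t => expmxv M t v).
Proof. by move=> s i; rewrite -expmxv_mulmx; exact: is_derive_expmxv. Qed.

(* Duality: [s |-> <exp ((t - s) A^T) w, z s>] has zero derivative. *)
Lemma expmxv_dual A z w t : solves_linear_ode A z ->
  \sum_i w i 0 * z t i 0 = \sum_i expmxv A^T t w i 0 * z 0 i 0.
Proof.
move=> z_ode.
pose Phi s := \sum_i expmxv A^T (t - s) w i 0 * z s i 0.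
have Phi'0 s : is_derive s 1 Phi 0.
  have e' i : is_derive s 1 (fun s => expmxv A^T (t - s) w i 0)
                (- (A^T *m expmxv A^T (t - s) w) i 0).
    have sub' : is_derive s 1 (fun s => t - s) (0 - 1) by exact: is_deriveB.
    have := @is_derive1_comp R (fun s => expmxv A^T s w i 0) (fun s => t - s) s _ _
      (is_derive_expmxv A^T w i (t - s)) sub'.
    by rewrite expmxv_mulmx sub0r mulrN1.
  have := is_derive_sum (fun i => is_deriveM (e' i) (z_ode s i)).
  rewrite /Phi fct_sumE => /is_derive_eq; apply.
  set e := expmxv _ _ _; set y := z s.
  under eq_bigr do rewrite /GRing.scale /= mulrN.
  apply/eqP; rewrite sumrB subr_eq0; apply/eqP.
  clearbody e y; under eq_bigr do rewrite mxE mulr_sumr.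
  under [RHS]eq_bigr do rewrite mxE mulr_sumr.
  rewrite [RHS]exchange_big; apply: eq_bigr => i _; apply: eq_bigr => j _.
  by rewrite mxE; ring.
have := @is_derive_0_is_cst R Phi t 0 Phi'0.
by rewrite /Phi subrr subr0 expmxv0.
Qed.

Lemma solves_linear_ode_unique A z t :
  solves_linear_ode A z -> z t = expmxv A t (z 0).
Proof.
move=> z_ode; apply/matrixP => i k; rewrite ord1.
have pick_i (y : 'cV[R]_N) : \sum_l (delta_mx i 0 : 'cV_N) l 0 * y l 0 = y i 0.
  rewrite (bigD1 i) //= big1 ?addr0 => [|l /negPf l_neq_i]; rewrite mxE eqxx.
    by rewrite mul1r.
  by rewrite l_neq_i mul0r.
rewrite -[LHS]pick_i -[RHS]pick_i (expmxv_dual _ t z_ode).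
by rewrite (expmxv_dual _ t (expmxv_solves A (z 0))) expmxv0.
Qed.

Lemma expmxv_add M s t v : expmxv M (s + t) v = expmxv M t (expmxv M s v).
Proof.
rewrite -[in RHS](addr0 s).
apply: (solves_linear_ode_unique (z := fun t => expmxv M (s + t) v)).
move=> u i; have add' : is_derive u 1 (fun u => s + u) (0 + 1) by exact: is_deriveD.
have := @is_derive1_comp R (fun u => expmxv M u v i 0) (fun u => s + u) u _ _
  (is_derive_expmxv M v i (s + u)) add'.
by rewrite expmxv_mulmx add0r mulr1.
Qed.

Definition metzler M := forall i j, i != j -> 0 <= M i j.

(* [exp (t (M + q)) = exp (q t) exp (t M)], and [M + q] is nonnegative for large [q]. *)
Lemma expmxv_ge0 M t v : metzler M -> (forall j, 0 <= v j 0) -> 0 <= t ->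
  forall i, 0 <= expmxv M t v i 0.
Proof.
move=> M_metzler v_ge0 t_ge0 i.
pose q := mxnorm1 M.
have Mq_ge0 i' j : 0 <= (M + q%:M) i' j.
  rewrite !mxE; have [<-|/M_metzler Mij_ge0] := eqVneq i' j.
    have := normr_le_mxnorm1 M i' i'; have := ler_norm (- M i' i').
    by rewrite normrN -/q mulr1n; lra.
  by rewrite mulr0n addr0.
pose z s := expR (q * s) *: expmxv M s v.
have z_ode : solves_linear_ode (M + q%:M) z.
  move=> s j; have exp' : is_derive s 1 (fun s => expR (q * s)) (expR (q * s) * q).
    have lin' : is_derive s 1 (fun s => q * s) q.
      have := is_deriveM (is_derive_cst q s 1) (is_derive_id s 1).
      by move/is_derive_eq; apply; rewrite /GRing.scale /=; ring.
    exact: (@is_derive1_comp R expR (fun s => q * s) s _ _ (is_derive_expR _) lin').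
  have := is_deriveM exp' (expmxv_solves M v s j).
  have -> : (fun s => z s j 0) = (fun s => expR (q * s) * expmxv M s v j 0).
    by apply/funext => s'; rewrite mxE.
  move/is_derive_eq; apply.
  by rewrite mulmxDl mul_scalar_mx -scalemxAr !mxE /GRing.scale /=; ring.
have := solves_linear_ode_unique t z_ode.
rewrite {2}/z mulr0 expR0 scale1r expmxv0 => /matrixP/(_ i 0).
rewrite mxE => z_t; have := expmxv_ge0_nonneg Mq_ge0 v_ge0 t_ge0 i.
by rewrite -z_t pmulr_rge0 // expR_gt0.
Qed.

Lemma expmxv_le M t v w : metzler M -> (forall j, v j 0 <= w j 0) -> 0 <= t ->
  forall i, expmxv M t v i 0 <= expmxv M t w i 0.
Proof.
move=> M_metzler v_le_w t_ge0 i; rewrite -subr_ge0.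
have := @expmxv_ge0 M t (w + (-1) *: v) M_metzler _ t_ge0 i.
rewrite expmxvD expmxvZ !mxE mulN1r; apply=> j.
by rewrite !mxE mulN1r subr_ge0.
Qed.

Lemma expmxv_le0 M t v : metzler M -> (forall j, v j 0 <= 0) -> 0 <= t ->
  forall i, expmxv M t v i 0 <= 0.
Proof.
move=> M_metzler v_le0 t_ge0 i.
have := @expmxv_le M t v 0 M_metzler _ t_ge0 i; rewrite -(scale0r 0) expmxvZ !mxE mul0r.
by apply=> j; rewrite scale0r mxE.
Qed.

End MatrixExponential.

Section LyapunovBound.
Variables (R : realType) (N : nat) (K : 'M[R]_N) (g a : 'cV[R]_N) (C : R).
Hypotheses (K_metzler : metzler K) (g_ge0 : forall j, 0 <= g j 0)
  (g_le : forall j, g j 0 <= C)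
  (Kg_le : forall j, (K *m g) j 0 + a j 0 <= 0)
  (Ka_le0 : forall j, (K *m a) j 0 <= 0)
  (a_indicator : forall l, a l 0 = 1 \/ (a l 0 = 0 /\ forall j, K l j = 0)).

(* [s |-> (exp (s K) g)_i + s (exp (s K) a)_i] is nonincreasing. *)
Lemma mul_expmxv_le t i : 0 <= t -> t * expmxv K t a i 0 <= g i 0.
Proof.
move=> t_ge0; pose phi s := expmxv K s g i 0 + s * expmxv K s a i 0.
have phi' (s : R) : is_derive s (1 : R) phi
    (expmxv K s (K *m g + a) i 0 + s * expmxv K s (K *m a) i 0).
  have := is_deriveD (is_derive_expmxv K g i s)
    (is_deriveM (is_derive_id s 1) (is_derive_expmxv K a i s)).
  by move/is_derive_eq; apply; rewrite expmxvD [in RHS]mxE /GRing.scale /=; ring.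
have phi_cont : {within `[0, t], continuous phi}%classic.
  apply/continuous_subspaceT => x; apply/differentiable_continuous/derivable1_diffP.
  by have [] := phi' x.
have [c] := MVT_segment t_ge0 (fun x _ => phi' x) phi_cont.
rewrite in_itv /= => /andP[c_ge0 _] phi_t.
have : phi t - phi 0 <= 0.
  have dg : expmxv K c (K *m g + a) i 0 <= 0.
    by apply: expmxv_le0 => // j; rewrite mxE.
  have da : c * expmxv K c (K *m a) i 0 <= 0 by rewrite mulr_ge0_le0 ?expmxv_le0.
  by rewrite phi_t subr0 mulr_le0_ge0 //; lra.
rewrite /phi mul0r addr0 expmxv0.
have := expmxv_ge0 K_metzler g_ge0 t_ge0 i; lra.
Qed.

Lemma expmxv_le_half T l : 0 < T -> 2 * C <= T ->
  expmxv K T a l 0 <= 2^-1 * a l 0.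
Proof.
move=> T_gt0 CT; have [a_l1|[a_l0 Kl0]] := a_indicator l; last first.
  by rewrite expmxv_row0 // a_l0 mulr0.
rewrite a_l1 mulr1 -(ler_pM2l T_gt0).
have := mul_expmxv_le l (ltW T_gt0); have := g_le l; lra.
Qed.

Lemma expmxv_geometric T m l : 0 < T -> 2 * C <= T ->
  expmxv K (m%:R * T) a l 0 <= (2 ^+ m)^-1 * a l 0.
Proof.
move=> T_gt0 CT; elim: m l => [|m IHm] l.
  by rewrite mul0r expmxv0 expr0 invr1 mul1r.
have -> : m.+1%:R * T = T + m%:R * T by rewrite -add1n natrD mulrDl mul1r.
have mT_ge0 : 0 <= m%:R * T by rewrite mulr_ge0 // ltW.
rewrite expmxv_add; apply: le_trans (expmxv_le K_metzler (w := 2^-1 *: a) _ mT_ge0 l) _.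
  by move=> j; apply: le_trans (expmxv_le_half j T_gt0 CT) _; rewrite mxE.
by rewrite expmxvZ mxE exprS invfM -mulrA ler_wpM2l ?invr_ge0.
Qed.

End LyapunovBound.

Section Nearest.
Local Open Scope order_scope.

Lemma nearest_above (T : finType) d (X : orderType d) (P : pred T) (f : T -> X)
    (t0 : X) (x : T) :
  {in P &, injective f} -> P x -> t0 < f x ->
  exists p, [/\ P p, t0 < f p &
    forall l, P l -> t0 < f l -> l = p <-> forall k, P k -> ~ (t0 < f k < f l)].
Proof.
move=> f_inj Px t0_fx.
have [p /andP[Pp t0_fp] p_min] := @arg_minP _ _ _ x [pred l | P l && (t0 < f l)] f
  (introT andP (conj Px t0_fx)).
exists p; split=> // l Pl t0_fl; split=> [-> k Pk /andP[t0_fk fk_fp]|no_between].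
  by have := p_min k; rewrite /= Pk t0_fk leNgt fk_fp => /(_ isT).
apply: f_inj => //; apply/eqP; rewrite eq_le p_min /= ?Pl ?t0_fl // andbT leNgt.
by apply/negP => fp_fl; apply: (no_between p Pp); rewrite t0_fp.
Qed.

End Nearest.

Section SegmentGeometry.
Variable R : realType.
Local Notation pt := (R * R)%type.
Implicit Types (a b p y : pt) (s t : R).

Definition sqnorm p : R := p.1 ^+ 2 + p.2 ^+ 2.
Definition sqlen a b : R := sqnorm (b.1 - a.1, b.2 - a.2).

Lemma sqnorm_ge0 p : 0 <= sqnorm p.
Proof. by rewrite addr_ge0 ?sqr_ge0. Qed.

Lemma pnorm_sqr p : pnorm p ^+ 2 = sqnorm p.
Proof. by rewrite sqr_sqrtr // sqnorm_ge0. Qed.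

Lemma pdist_sqr a b : pdist a b ^+ 2 = sqlen a b.
Proof. by rewrite pnorm_sqr /sqlen /sqnorm /=; ring. Qed.

Lemma pdist_ge0 a b : 0 <= pdist a b.
Proof. exact: sqrtr_ge0. Qed.

Lemma pdistC a b : pdist a b = pdist b a.
Proof. by rewrite /pdist /pnorm /=; congr Num.sqrt; ring. Qed.

Lemma pdistxx a : pdist a a = 0.
Proof. by rewrite /pdist /pnorm /= !subrr expr0n /= addr0 sqrtr0. Qed.

Lemma sqlen_gt0 a b : a != b -> 0 < sqlen a b.
Proof.
case: a b => [a1 a2] [b1 b2]; rewrite xpair_eqE negb_and /sqlen /sqnorm /= => ab.
have := sqr_ge0 (b1 - a1); have := sqr_ge0 (b2 - a2).
case/orP: ab => [a1b1|a2b2].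
  have : 0 < (b1 - a1) ^+ 2 by rewrite exprn_even_gt0 //= subr_eq0 eq_sym.
  lra.
have : 0 < (b2 - a2) ^+ 2 by rewrite exprn_even_gt0 //= subr_eq0 eq_sym.
lra.
Qed.

Lemma lerp0 a b : lerp a b 0 = a.
Proof. by case: a => a1 a2; rewrite /lerp /= !mul0r !addr0. Qed.

Lemma lerp1 a b : lerp a b 1 = b.
Proof. by case: a b => [a1 a2] [b1 b2]; rewrite /lerp /= !mul1r !subrKC. Qed.

Definition param a b y : R :=
  ((y.1 - a.1) * (b.1 - a.1) + (y.2 - a.2) * (b.2 - a.2)) / sqlen a b.

Lemma param_lerp a b t : a != b -> param a b (lerp a b t) = t.
Proof.
move=> /sqlen_gt0; rewrite lt0r => /andP[ab_neq0 _].
by move: ab_neq0; rewrite /param /lerp /sqlen /sqnorm /= => ab_neq0; field.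
Qed.

Lemma cseg_param a b y : a != b -> cseg a b y ->
  [/\ 0 <= param a b y, param a b y <= 1 & y = lerp a b (param a b y)].
Proof. by move=> ab [t [t_ge0 t_le1 ->]]; rewrite param_lerp. Qed.

Lemma pdist_lerp a b s t :
  pdist (lerp a b s) (lerp a b t) = `|s - t| * Num.sqrt (sqlen a b).
Proof.
rewrite /pdist /pnorm /sqlen /sqnorm /lerp /=.
rewrite (_ : _ + _ = (s - t) ^+ 2 * ((b.1 - a.1) ^+ 2 + (b.2 - a.2) ^+ 2)); last by ring.
by rewrite sqrtrM ?sqr_ge0 // sqrtr_sqr.
Qed.

Lemma oseg_lerpP a b t1 t2 y : t1 < t2 ->
  oseg (lerp a b t1) (lerp a b t2) y <-> exists2 s, t1 < s < t2 & y = lerp a b s.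
Proof.
move=> t12; split.
  case=> l [l_gt0 l_lt1 ->]; exists (t1 + l * (t2 - t1)).
    by apply/andP; split; nra.
  by rewrite /lerp /=; congr (_, _); ring.
case=> s /andP[t1s st2] ->; exists ((s - t1) / (t2 - t1)).
have t21 : t2 - t1 != 0 by rewrite subr_eq0 gt_eqF.
split; [by rewrite divr_gt0 ?subr_gt0 | by rewrite ltr_pdivrMr ?subr_gt0 //; lra |].
by rewrite /lerp /=; congr (_, _); field.
Qed.

Lemma osegC a b : oseg a b = oseg b a.
Proof.
by apply/funext => y; apply/propext; split=> -[l [l_gt0 l_lt1 ->]];
  exists (1 - l); (split; [lra | lra | rewrite /lerp /=; congr (_, _); ring]).
Qed.

Lemma sqnorm_lerp_le a b s t : 0 <= s <= 1 -> 0 <= t <= 1 ->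
  sqnorm (lerp a b t) <= 2 * sqnorm (lerp a b s) + 2 * sqlen a b.
Proof.
move=> /andP[s_ge0 s_le1] /andP[t_ge0 t_le1].
rewrite /sqlen /sqnorm /lerp /=.
set d1 := b.1 - a.1; set d2 := b.2 - a.2.
set x1 := a.1 + s * d1; set x2 := a.2 + s * d2.
have -> : a.1 + t * d1 = x1 + (t - s) * d1 by rewrite /x1; ring.
have -> : a.2 + t * d2 = x2 + (t - s) * d2 by rewrite /x2; ring.
have ts2 : (t - s) ^+ 2 <= 1.
  rewrite -subr_ge0 (_ : 1 - _ = (1 - (t - s)) * (1 + (t - s))); last by ring.
  by apply: mulr_ge0; lra.
have := sqr_ge0 (x1 - (t - s) * d1); have := sqr_ge0 (x2 - (t - s) * d2).
have := ler_wpM2r (sqr_ge0 d1) ts2; have := ler_wpM2r (sqr_ge0 d2) ts2.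
rewrite !mul1r (_ : _ + _ = 2 * (x1 ^+ 2 + x2 ^+ 2)
  + 2 * ((t - s) ^+ 2 * d1 ^+ 2 + (t - s) ^+ 2 * d2 ^+ 2)
  - ((x1 - (t - s) * d1) ^+ 2 + (x2 - (t - s) * d2) ^+ 2)); last by ring.
lra.
Qed.

(* A walk at [lerp a b t0] jumping to [lerp a b tm] and [lerp a b tp] at the
   T-graph rates has [sqnorm] drift exactly 1. *)
Lemma lerp_sqnorm_drift a b tm t0 tp : a != b -> tm < t0 < tp ->
  let D := Num.sqrt (sqlen a b) in
  ((tp - t0) * D * ((tp - tm) * D))^-1 * (sqnorm (lerp a b tp) - sqnorm (lerp a b t0))
  + ((t0 - tm) * D * ((tp - tm) * D))^-1 * (sqnorm (lerp a b tm) - sqnorm (lerp a b t0))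
  = 1.
Proof.
move=> ab /andP[tm_t0 t0_tp] D.
have D_neq0 : D != 0 by rewrite gt_eqF // sqrtr_gt0 sqlen_gt0.
have DD : D ^+ 2 = sqlen a b by rewrite sqr_sqrtr // ltW // sqlen_gt0.
have E_neq0 : sqlen a b != 0 by rewrite -DD expf_neq0.
have tp0 : tp - t0 != 0 by rewrite subr_eq0 gt_eqF.
have t0m : t0 - tm != 0 by rewrite subr_eq0 gt_eqF.
have tpm : tp - tm != 0 by rewrite subr_eq0 gt_eqF // (lt_trans tm_t0).
transitivity (sqlen a b / D ^+ 2); last by rewrite DD divff.
move: E_neq0; clearbody D; rewrite /sqlen /sqnorm /lerp /= => E_neq0.
by field; rewrite D_neq0 tp0 t0m tpm.
Qed.

End SegmentGeometry.

Section TGraphNeighbours.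
Variables (R : realType) (segs : seq ((R * R) * (R * R))) (bpts : seq (R * R)).
Local Notation n := (nverts segs bpts).
Local Notation v := (@vtx R segs bpts).

Lemma vtx_inj : injective v.
Proof.
move=> i j vij; apply/val_inj/eqP.
by rewrite -(nth_uniq (0, 0) (ltn_ord i) (ltn_ord j) (undup_uniq _)); apply/eqP.
Qed.

Lemma vtx_onto p : p \in verts segs bpts -> exists k, v k = p.
Proof.
move=> p_vert; have p_idx : (index p (verts segs bpts) < n)%N by rewrite index_mem.
by exists (Ordinal p_idx); rewrite /vtx /= nth_index.
Qed.

Lemma seg_verts s : s \in segs -> s.1 \in verts segs bpts /\ s.2 \in verts segs bpts.
Proof.
move=> s_seg; rewrite /verts !mem_undup !mem_cat.
by split; apply/orP; left; apply/flatten_mapP; exists s; rewrite // !inE eqxx ?orbT.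
Qed.

Lemma interior_vertex_seg j : is_Tgraph segs bpts -> v j \notin bpts ->
  exists a b t0, [/\ (a, b) \in segs, a != b, 0 < t0 < 1, v j = lerp a b t0 &
    forall s, s \in segs -> oseg s.1 s.2 (v j) -> s = (a, b)].
Proof.
case=> seg_ne [_ [_ [_ [_ interior]]]] j_int.
have [k [k_lt [t0 [t0_gt0 t0_lt1 vj]] k_uniq]] := interior _ (mem_nth _ (ltn_ord j)) j_int.
case E : (nth (seg0 R) segs k) vj => [a b] /= vj.
have ab_seg : (a, b) \in segs by rewrite -E mem_nth.
exists a, b, t0; split=> //; [exact: seg_ne ab_seg | by rewrite t0_gt0 |].
move=> s s_seg s_vj.
have s_idx : (index s segs < size segs)%N by rewrite index_mem.
by rewrite -E -(k_uniq _ s_idx) ?nth_index.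
Qed.

Section OnSegment.
Variables (a b : R * R).
Hypothesis ab : a != b.
Local Notation pr l := (param a b (v l)).

Definition on_seg : pred 'I_n := fun l => `[< cseg a b (v l) >].

Lemma on_segP l : on_seg l -> [/\ 0 <= pr l, pr l <= 1 & v l = lerp a b (pr l)].
Proof. by move/asboolP; exact: cseg_param. Qed.

Lemma on_seg_lerp l t : 0 <= t <= 1 -> v l = lerp a b t -> on_seg l /\ pr l = t.
Proof.
by move=> /andP[t_ge0 t_le1] vl; rewrite vl param_lerp //; split=> //; apply/asboolP; exists t.
Qed.

Lemma param_inj_on_seg : {in on_seg &, injective (fun l => pr l)}.
Proof.
by move=> k l /on_segP[_ _ vk] /on_segP[_ _ vl] prkl; apply: vtx_inj; rewrite vk vl prkl.
Qed.

Lemma oseg_vtx_free t1 t2 : 0 <= t1 -> t1 < t2 -> t2 <= 1 ->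
  (forall k, ~ oseg (lerp a b t1) (lerp a b t2) (v k)) <->
  (forall k, on_seg k -> ~ (t1 < pr k < t2)).
Proof.
move=> t1_ge0 t12 t2_le1; split=> free k.
  move=> /on_segP[_ _ vk] btw; apply: (free k).
  by apply/oseg_lerpP => //; exists (pr k).
move=> /oseg_lerpP-/(_ t12)[s /andP[t1s st2] vk].
have [k_on prk] := on_seg_lerp (t := s) (l := k) (ltac:(apply/andP; lra)) vk.
by apply: (free k k_on); rewrite prk t1s.
Qed.

Lemma vtx_free_above t0 l : 0 <= t0 -> on_seg l -> t0 < pr l ->
  (forall k, ~ oseg (lerp a b t0) (v l) (v k)) <->
  (forall k, on_seg k -> ~ (t0 < pr k < pr l)).
Proof.
by move=> t0_ge0 /on_segP[_ l_le1 vl] t0_l; rewrite {1}vl; apply: oseg_vtx_free.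
Qed.

Lemma vtx_free_below t0 l : t0 <= 1 -> on_seg l -> pr l < t0 ->
  (forall k, ~ oseg (lerp a b t0) (v l) (v k)) <->
  (forall k, on_seg k -> ~ (- t0 < - pr k < - pr l)).
Proof.
move=> t0_le1 /on_segP[l_ge0 _ vl] l_t0; rewrite osegC {1}vl oseg_vtx_free //.
by split=> free k k_on /andP[lt1 lt2]; apply: (free k k_on); apply/andP; split; lra.
Qed.

End OnSegment.

Lemma nbr_on_seg j a b l : v j \notin bpts -> (a, b) \in segs -> oseg a b (v j) ->
  (forall s, s \in segs -> oseg s.1 s.2 (v j) -> s = (a, b)) ->
  nbr j l <-> [/\ l != j, on_seg a b l & forall k, ~ oseg (v j) (v l) (v k)].
Proof.
move=> j_int ab_seg ab_vj ab_uniq; split.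
  move/asboolP=> [_ lj [s s_seg [s_vj s_vl free]]].
  by move: s_vl; rewrite (ab_uniq _ s_seg s_vj) => s_vl; split=> //; apply/asboolP.
by case=> lj /asboolP ab_vl free; apply/asboolP; split=> //; exists (a, b).
Qed.

Lemma interior_nbrs j : is_Tgraph segs bpts -> v j \notin bpts ->
  exists (p m : 'I_n) (a b : R * R) (tm t0 tp : R),
  [/\ a != b, tm < t0 < tp,
      [/\ v m = lerp a b tm, v j = lerp a b t0 & v p = lerp a b tp]
    & forall l, nbr j l = (l == p) || (l == m)].
Proof.
move=> HT j_int.
have [a [b [t0 [ab_seg ab /andP[t0_gt0 t0_lt1] vj ab_uniq]]]] := interior_vertex_seg HT j_int.
have nbrE l := nbr_on_seg l j_int ab_seg (ex_intro _ t0 (And3 t0_gt0 t0_lt1 vj)) ab_uniq.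
have [[ia via] [ib vib]] : (exists k, v k = a) /\ (exists k, v k = b).
  by have [a_vert b_vert] := seg_verts ab_seg; split; apply: vtx_onto.
have [ia_on pr_ia] : on_seg a b ia /\ param a b (v ia) = 0.
  by apply: on_seg_lerp; rewrite ?lerp0 ?lexx ?ler01.
have [ib_on pr_ib] : on_seg a b ib /\ param a b (v ib) = 1.
  by apply: on_seg_lerp; rewrite ?lerp1 ?lexx ?ler01.
have [p [p_on t0_p p_near]] := nearest_above (param_inj_on_seg ab) ib_on
  (ltac:(by rewrite pr_ib) : t0 < param a b (v ib)).
have neg_inj : {in on_seg a b &, injective (fun l => - param a b (v l))}.
  by move=> k l k_on l_on /oppr_inj; apply: param_inj_on_seg.
have [m [m_on t0_m m_near]] := nearest_above neg_inj ia_on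
  (ltac:(by rewrite pr_ia oppr0 oppr_lt0) : - t0 < - param a b (v ia)).
have [_ p_le1 vp] := on_segP ab p_on; have [m_ge0 _ vm] := on_segP ab m_on.
exists p, m, a, b, (param a b (v m)), t0, (param a b (v p)).
split=> //; first by apply/andP; split; lra.
move=> l; apply/idP/idP.
  move=> /nbrE[lj l_on free]; have [_ _ vl] := on_segP ab l_on.
  case: (ltgtP (param a b (v l)) t0) => [l_t0|t0_l|l_t0].
  - apply/orP; right; apply/eqP/(m_near l l_on); first lra.
    by apply/(vtx_free_below ab (ltW t0_lt1) l_on l_t0); rewrite -vj.
  - apply/orP; left; apply/eqP/(p_near l l_on t0_l).
    by apply/(vtx_free_above ab (ltW t0_gt0) l_on t0_l); rewrite -vj.
  - have vlj : v l = v j by rewrite vj -l_t0.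
    by rewrite (vtx_inj vlj) eqxx in lj.
case/orP=> /eqP ->; apply/nbrE; split.
- by apply/eqP=> pj; move: t0_p; rewrite pj vj param_lerp // ltxx.
- exact: p_on.
- by rewrite vj; apply/(vtx_free_above ab (ltW t0_gt0) p_on t0_p)/(p_near p p_on t0_p).
- by apply/eqP=> mj; move: t0_m; rewrite mj vj param_lerp // ltxx.
- exact: m_on.
- have m_t0 : param a b (v m) < t0 by lra.
  by rewrite vj; apply/(vtx_free_below ab (ltW t0_lt1) m_on m_t0)/(m_near m m_on t0_m).
Qed.

End TGraphNeighbours.

Section TGraphGenerator.
Variables (R : realType) (segs : seq ((R * R) * (R * R))) (bpts : seq (R * R)).
Local Notation n := (nverts segs bpts).
Local Notation v := (@vtx R segs bpts).
Local Notation G := (generator segs bpts).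
Implicit Types (i j k l p m : 'I_n).

Lemma rate_ge0 i j : 0 <= rate i j.
Proof.
by rewrite /rate; case: ifP => // _; rewrite invr_ge0 mulr_ge0 ?pdist_ge0 ?bigmax_ge_id.
Qed.

Lemma rate_nnbr i j : ~~ nbr i j -> rate i j = 0.
Proof. by rewrite /rate => /negPf ->. Qed.

Lemma generator_offdiag i j : i != j -> G i j = rate i j.
Proof. by rewrite mxE => /negPf ->. Qed.

Lemma mul_generator (f : 'cV[R]_n) i :
  (G *m f) i 0 = \sum_k rate i k * (f k 0 - f i 0).
Proof.
rewrite mxE (bigD1 i) //= [in RHS](bigD1 i) //= subrr mulr0 add0r mxE eqxx.
rewrite mulNr mulr_suml addrC -sumrB; apply: eq_bigr => k ki.
by rewrite mxE eq_sym (negPf ki) mulrBr.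
Qed.

Lemma nbr_span_two j p m : (forall l, nbr j l = (l == p) || (l == m)) ->
  nbr_span j = pdist (v p) (v m).
Proof.
move=> nbrE; rewrite /nbr_span; apply/le_anti/andP; split.
  have inner l : (l == p) || (l == m) ->
      \big[Num.max/0]_(k | nbr j k) pdist (v l) (v k) <= pdist (v p) (v m).
    move=> l_pm; apply: bigmax_le => [|k]; first exact: pdist_ge0.
    rewrite nbrE; case/orP: l_pm => /eqP-> /orP[]/eqP->.
    all: rewrite ?pdistxx ?pdist_ge0 ?lexx //.
    by have := lexx (pdist (v p) (v m)); rewrite {1}pdistC.
  by apply: bigmax_le => [|l]; [exact: pdist_ge0 | rewrite nbrE; exact: inner].
apply: (@bigmax_sup _ _ _ _ p); first by rewrite nbrE eqxx.
by apply: (@bigmax_sup _ _ _ _ m); rewrite ?nbrE ?eqxx ?orbT.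
Qed.

Definition sqnorm_vtx : 'cV[R]_n := \col_k sqnorm (v k).

(* [|X_t|^2 - t] is a martingale. *)
Lemma generator_sqnorm j : is_Tgraph segs bpts -> v j \notin bpts ->
  (G *m sqnorm_vtx) j 0 = 1.
Proof.
move=> HT j_int.
have [p [m [a [b [tm [t0 [tp [ab /andP[tm_t0 t0_tp] [vm vj vp] nbrE]]]]]]]] :=
  interior_nbrs HT j_int.
have pm : p != m.
  apply/eqP=> pm; have := param_lerp tp ab.
  by rewrite -vp pm vm param_lerp // => tmp; lra.
rewrite mul_generator (bigD1 p) //= (bigD1 m) /=; last by rewrite eq_sym.
rewrite big1 ?addr0 => [|l /andP[lp lm]]; last first.
  by rewrite rate_nnbr ?mul0r // nbrE negb_or lp lm.
have tm_tp : tm < tp := lt_trans tm_t0 t0_tp.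
rewrite /rate !nbrE !eqxx /= ?orbT (nbr_span_two nbrE) !mxE vp vm vj !pdist_lerp.
rewrite [`|tm - t0|]ltr0_norm ?subr_lt0 // opprB !gtr0_norm ?subr_gt0 //.
by apply: lerp_sqnorm_drift; rewrite ?tm_t0.
Qed.

Lemma killed_gen_metzler r : metzler (killed_gen segs bpts r).
Proof.
by move=> i j ij; rewrite mxE; case: ifP => // _; rewrite generator_offdiag // rate_ge0.
Qed.

Lemma killed_gen_row0 r i j : ~~ alive r i -> killed_gen segs bpts r i j = 0.
Proof. by rewrite mxE => /negPf ->. Qed.

Definition alive_mask r (f : 'cV[R]_n) : 'cV[R]_n := \col_i ((alive r i)%:R * f i 0).

(* Killing the walk outside the alive states only drops jumps to
   states where [f] is nonnegative. *)
Lemma killed_gen_mask_le r (f : 'cV[R]_n) j : alive r j ->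
  (forall k, nbr j k -> 0 <= f k 0) ->
  (killed_gen segs bpts r *m alive_mask r f) j 0 <= (G *m f) j 0.
Proof.
move=> j_alive f_nbr; rewrite !mxE; apply: ler_sum => k _.
rewrite !mxE j_alive; case k_alive : (alive r k); first by rewrite mul1r.
have kj : j != k by apply: contraFneq k_alive => <-.
rewrite /= mul0r (negPf kj).
have [/f_nbr f_ge0|/rate_nnbr ->] := boolP (nbr j k); last by rewrite mul0r.
by rewrite mulr_ge0 ?rate_ge0.
Qed.

Lemma alive_sqnorm_lt r j : alive r j -> sqnorm (v j) < r ^+ 2.
Proof.
case/andP=> _ vj_lt; rewrite -pnorm_sqr ltr_pXn2r ?nnegrE ?sqrtr_ge0 //.
exact: le_trans (sqrtr_ge0 _) (ltW vj_lt).
Qed.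

Lemma nbr_sqnorm_le L r j l : (forall s, s \in segs -> pdist s.1 s.2 <= L) ->
  L <= r -> alive r j -> nbr j l -> sqnorm (v l) <= 4 * r ^+ 2.
Proof.
move=> seg_le L_le_r /alive_sqnorm_lt vj_lt /asboolP[_ _ [s s_seg [s_vj s_vl _]]].
have [t0 [t0_gt0 t0_lt1 vj]] := s_vj; have [tl [tl_ge0 tl_le1 vl]] := s_vl.
have L_ge0 : 0 <= L := le_trans (pdist_ge0 _ _) (seg_le s s_seg).
have s_sqlen : sqlen s.1 s.2 <= r ^+ 2.
  by rewrite -pdist_sqr lerXn2r ?nnegrE ?pdist_ge0 ?(le_trans (seg_le s s_seg)) ?(le_trans L_ge0).
have : sqnorm (v l) <= 2 * sqnorm (v j) + 2 * sqlen s.1 s.2.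
  by rewrite vj vl; apply: sqnorm_lerp_le; apply/andP; lra.
lra.
Qed.

End TGraphGenerator.

Section KilledWalkSurvival.
Variables (R : realType) (segs : seq ((R * R) * (R * R))) (bpts : seq (R * R)).
Local Notation n := (nverts segs bpts).
Local Notation v := (@vtx R segs bpts).
Local Notation G := (generator segs bpts).
Local Notation K r := (killed_gen segs bpts r).
Local Notation alive_vec r := (alive_ind segs bpts r).
Implicit Types (r t : R) (i j k l : 'I_n).

Lemma mpowE (M : 'M[R]_n) (k : nat) : mpow M k = M ^+ k.
Proof. by elim: k => [|k IHk]; rewrite ?expr0 // exprS /= IHk. Qed.

Lemma survivalE r t i : survival r t i = expmxv (K r) t (alive_vec r) i 0.
Proof.
rewrite /survival mxE; apply: (congr1 (fun u => limn u)); apply/funext => N.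
rewrite /pseries /series /= big_mkord; apply: eq_bigr => k _.
by rewrite mpowE /expmx_coef; ring.
Qed.

Lemma alive_indE r : alive_vec r = alive_mask r (const_mx 1).
Proof. by apply/matrixP => i j; rewrite !mxE mulr1. Qed.

Lemma alive_ind_indicator r l :
  alive_vec r l 0 = 1 \/ (alive_vec r l 0 = 0 /\ forall j, K r l j = 0).
Proof.
rewrite mxE; case: (boolP (alive r l)) => [_|l_dead]; first by left.
by right; split=> // j; exact: killed_gen_row0.
Qed.

Lemma killed_gen_alive_ind_le0 r j : (K r *m alive_vec r) j 0 <= 0.
Proof.
have [j_alive|j_dead] := boolP (alive r j); last first.
  by rewrite mxE big1 // => k _; rewrite killed_gen_row0 ?mul0r.
rewrite alive_indE; apply: (le_trans (killed_gen_mask_le j_alive _)).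
  by move=> k _; rewrite mxE.
by rewrite mul_generator big1 // => k _; rewrite !mxE subrr mulr0.
Qed.

Definition lyapunov r : 'cV[R]_n := alive_mask r (\col_k (4 * r ^+ 2 - sqnorm (v k))).

Lemma lyapunov_ge0 r k : 0 <= lyapunov r k 0.
Proof.
rewrite !mxE; have [/alive_sqnorm_lt vk_lt|_] := boolP (alive r k); last by rewrite mul0r.
by rewrite mul1r subr_ge0; have := sqr_ge0 r; lra.
Qed.

Lemma lyapunov_le r k : lyapunov r k 0 <= 4 * r ^+ 2.
Proof.
rewrite !mxE; have := sqnorm_ge0 (v k); have := sqr_ge0 r.
by case: (alive r k); rewrite ?mul1r ?mul0r; lra.
Qed.

Lemma killed_gen_lyapunov_le L r : is_Tgraph segs bpts ->
  (forall s, s \in segs -> pdist s.1 s.2 <= L) -> L <= r ->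
  forall j, (K r *m lyapunov r) j 0 + alive_vec r j 0 <= 0.
Proof.
move=> HT seg_le L_le_r j.
have [j_alive|j_dead] := boolP (alive r j); last first.
  rewrite !mxE (negPf j_dead) big1 ?addr0 // => k _.
  by rewrite killed_gen_row0 ?mul0r.
pose f := \col_k (4 * r ^+ 2 - sqnorm (v k)).
have f_nbr k : nbr j k -> 0 <= f k 0.
  by rewrite mxE subr_ge0; exact: nbr_sqnorm_le seg_le L_le_r j_alive.
have Gf : (G *m f) j 0 = -1.
  have j_int : v j \notin bpts by case/andP: j_alive.
  rewrite mul_generator -(generator_sqnorm HT j_int) mul_generator -sumrN.
  by apply: eq_bigr => k _; rewrite !mxE; ring.
have := killed_gen_mask_le j_alive f_nbr.
by rewrite Gf /lyapunov -/f [alive_vec r j 0]mxE j_alive /=; lra.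
Qed.

End KilledWalkSurvival.

Theorem lemma2 (R : realType) (segs : seq ((R * R) * (R * R))) (bpts : seq (R * R))
    (L r : R) (i : 'I_(nverts segs bpts)) (n : nat) :
  is_Tgraph segs bpts ->
  (forall s, s \in segs -> pdist s.1 s.2 <= L) ->
  L <= r ->
  pnorm (vtx i) < r ->
  (1 <= n)%N ->
  survival r (18 * n%:R * r ^+ 2) i <= (2 ^+ n)^-1.
Proof.
move=> HT seg_le L_le_r vi_lt _.
have r_gt0 : 0 < r := le_lt_trans (sqrtr_ge0 _) vi_lt.
have T_gt0 : 0 < 18 * r ^+ 2 by rewrite mulr_gt0 // exprn_gt0.
have CT : 2 * (4 * r ^+ 2) <= 18 * r ^+ 2 by have := sqr_ge0 r; lra.
have -> : 18 * n%:R * r ^+ 2 = n%:R * (18 * r ^+ 2) by ring.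
rewrite survivalE; apply: le_trans (expmxv_geometric (killed_gen_metzler r)
  (lyapunov_ge0 r) (lyapunov_le r) (killed_gen_lyapunov_le HT seg_le L_le_r)
  (killed_gen_alive_ind_le0 r) (alive_ind_indicator r) n i T_gt0 CT) _.
rewrite ler_piMr ?invr_ge0 ?exprn_ge0 //.
by case: (alive_ind_indicator r i) => [->|[-> _]]; rewrite ?ler01.
Qed.
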